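(* Let $V_0$ be a nonlocal vertex algebra over $\mathbb{C}$ and let $W_0$ be a simple $V_0$-module. Regard $V=V_0[[\hbar]]$ as an $\hbar$-adic nonlocal vertex algebra and $W=W_0[[\hbar]]$ as a $V$-module (by $\hbar$-linear extension). Then $W$ is a simple $V$-module.
   Context: Let $\hbar$ be a formal variable. A $\mathbb{C}[[\hbar]]$-module is topologically free if it is of the form $W_0[[\hbar]]$ for a complex vector space $W_0$. An ordinary nonlocal vertex algebra $V_0$ (resp. a $V_0$-module $W_0$) makes $V_0[[\hbar]]$ an $\hbar$-adic nonlocal vertex algebra (resp. $W_0[[\hbar]]$ a module over it) by extending the vertex operators $\mathbb{C}[[\hbar]]$-linearly and $\hbar$-adically continuously. For a $\mathbb{C}[[\hbar]]$-submodule $U$ of a topologically free module $W$, set $[U]=\{w\in W:\hbar^n w\in U\text{ for some }n\ge 1\}$ and let $\overline{U}$ be the closure of $U$ in the $\hbar$-adic topology. Convention: a submodule of a module $W$ over an $\hbar$-adic nonlocal vertex algebra $V$ is a $\mathbb{C}[[\hbar]]$-submodule $W_1$ stable under all operators $u_n$ ($u\in V$, $n\in\mathbb{Z}$, where $Y_W(u,z)=\sum_n u_nz^{-n-1}$) such that $\overline{W_1}=W_1$ and $[W_1]=W_1$. A module $W$ is simple if $W\neq 0$ and its only submodules are $0$ and $W$. *)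

From HB Require Import structures.
From mathcomp Require Import all_boot all_order all_algebra.
From mathcomp Require Import complex.
From mathcomp Require Import Rstruct.
Set Implicit Arguments. Unset Strict Implicit. Unset Printing Implicit Defensive.
Import Order.TTheory GRing.Theory Num.Theory.
Local Open Scope ring_scope.

Definition CC : fieldType := (Rdefinitions.R)[i].

(* Vertex operators are encoded by their modes:                        *)
(*   Y(u,z) w = \sum_{n in Z} (Y u n w) z^{-n-1}.                      *)

Definition vertex_operator_map (V W : lmodType CC)
  (Y : V -> int -> W -> W) : Prop :=
  [/\ forall (a : CC) u u' n w, Y (a *: u + u') n w = a *: Y u n w + Y u' n w,
      forall (a : CC) u n w w', Y u n (a *: w + w') = a *: Y u n w + Y u n w'
    & forall u w, exists N : int, forall n : int, N <= n -> Y u n w = 0].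

Definition gbinom (x : int) (k : nat) : int :=
  if (0 <= x)%R then ('C(absz x, k))%:Z
  else (-1) ^+ k * ('C((absz x + k).-1, k))%:Z.

(* Coefficient of z0^a z2^b in  Y(u, z0 + z2) Y(v, z2) w, where
   (z0+z2)^{-m-1} is expanded in nonnegative powers of z2:
     sum_{k >= 0} binom(a+k, k) u_{-a-1-k} v_{k-1-b} w.
   N is any integer with v_n w = 0 for all n >= N; then only the terms
   with k < N + b + 1 can be nonzero, so the sum is truncated there. *)
Definition assoc_lhs (V W : lmodType CC) (YW : V -> int -> W -> W)
  (u v : V) (w : W) (N a b : int) : W :=
  \sum_(k < absz (Num.max 0 (N + b + 1)))
     ((gbinom (a + k%:Z) k)%:~R : CC) *: YW u (- a - 1 - k%:Z) (YW v (k%:Z - 1 - b) w).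

(* Coefficient of z0^a z2^b in  Y(Y(u, z0) v, z2) w. *)
Definition assoc_rhs (V W : lmodType CC) (Y : V -> int -> V -> V)
  (YW : V -> int -> W -> W) (u v : V) (w : W) (a b : int) : W :=
  YW (Y u (- a - 1) v) (- b - 1) w.

(* Weak associativity: for u, v in V, w in W there is l >= 0 with
   (z0+z2)^l Y(u,z0+z2)Y(v,z2)w = (z0+z2)^l Y(Y(u,z0)v,z2)w.
   Multiplication by (z0+z2)^l = sum_i C(l,i) z0^i z2^(l-i) is written
   coefficientwise. *)
Definition weak_assoc (V W : lmodType CC) (Y : V -> int -> V -> V)
  (YW : V -> int -> W -> W) : Prop :=
  forall (u v : V) (w : W), exists l : nat,
    forall N : int, (forall n : int, N <= n -> YW v n w = 0) ->
    forall a b : int,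
      \sum_(i < l.+1) ('C(l, i))%:R *:
          assoc_lhs YW u v w N (a - i%:Z) (b - (l - i)%:Z)
      = \sum_(i < l.+1) ('C(l, i))%:R *:
          assoc_rhs Y YW u v w (a - i%:Z) (b - (l - i)%:Z).

Definition is_nonlocal_va (V : lmodType CC) (vac : V)
  (Y : V -> int -> V -> V) : Prop :=
  [/\ vertex_operator_map Y,
      forall n v, Y vac n v = if n == (-1)%R then v else 0,
      forall v n, 0 <= n -> Y v n vac = 0,
      forall v, Y v (-1) vac = v
    & weak_assoc Y Y].

Definition is_nlva_module (V : lmodType CC) (vac : V) (Y : V -> int -> V -> V)
  (W : lmodType CC) (YW : V -> int -> W -> W) : Prop :=
  [/\ vertex_operator_map YW,
      forall n w, YW vac n w = if n == (-1)%R then w else 0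
    & weak_assoc Y YW].

Definition is_submodule (V W : lmodType CC) (YW : V -> int -> W -> W)
  (S : W -> Prop) : Prop :=
  [/\ S 0,
      forall (a : CC) w w', S w -> S w' -> S (a *: w + w')
    & forall u n w, S w -> S (YW u n w)].

Definition is_simple_module (V W : lmodType CC) (YW : V -> int -> W -> W) : Prop :=
  (exists w : W, w != 0) /\
  forall S : W -> Prop, is_submodule YW S ->
    (forall w, S w -> w = 0) \/ (forall w, S w).

(* hbar-adic extension. An element of X[[hbar]] is its coefficient     *)
(* sequence  nat -> X.                                                 *)
Definition hseries (X : Type) := nat -> X.

Definition hscale (W : lmodType CC) (c : hseries CC) (w : hseries W) : hseries W :=
  fun k => \sum_(i < k.+1) c i *: w (k - i)%N.

Definition hadd (W : lmodType CC) (w w' : hseries W) : hseries W :=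
  fun k => w k + w' k.

Definition hzero (W : lmodType CC) : hseries W := fun _ => 0.

Definition hshift (W : lmodType CC) (n : nat) (w : hseries W) : hseries W :=
  fun k => if (k < n)%N then 0 else w (k - n)%N.

Definition hext_modes (V W : lmodType CC) (Y : V -> int -> W -> W)
  : hseries V -> int -> hseries W -> hseries W :=
  fun u n w k => \sum_(i < k.+1) Y (u i) n (w (k - i)%N).

(* Submodule of a module over an hbar-adic nonlocal vertex algebra, in the
   topologically free case W = W0[[hbar]], V = V0[[hbar]]:
   a C[[hbar]]-submodule stable under all u_n, closed in the hbar-adic
   topology, and with [W1] = W1. *)
Definition is_hsubmodule (V W : lmodType CC)
  (YW : hseries V -> int -> hseries W -> hseries W)
  (S : hseries W -> Prop) : Prop :=
  [/\ S (hzero W) /\ (forall w w', S w -> S w' -> S (hadd w w')),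
      forall (c : hseries CC) w, S w -> S (hscale c w),
      forall u n w, S w -> S (YW u n w),
      (* closure: w in the hbar-adic closure of S lies in S *)
      forall w, (forall k : nat, exists2 s, S s & forall i, (i < k)%N -> s i = w i) -> S w
    & (* [S] = S *)
      forall (n : nat) w, (1 <= n)%N -> S (hshift n w) -> S w].

Definition is_simple_hmodule (V W : lmodType CC)
  (YW : hseries V -> int -> hseries W -> hseries W) : Prop :=
  (exists w : hseries W, w <> hzero W) /\
  forall S : hseries W -> Prop, is_hsubmodule YW S ->
    (forall w, S w -> w = hzero W) \/ (forall w, S w).

(* If S <> 0, saturation ([S] = S) lets us
   divide a nonzero element of S by a power of hbar until its constant term is
   nonzero.  The constant terms of S form a submodule of W0, hence all of W0 by
   simplicity.  Then every w is approximated modulo hbar^k by elements of S,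
   correcting the k-th coefficient with hbar^k times an element of S, and
   closedness gives w in S. *)
From Stdlib Require Import Classical FunctionalExtensionality.
From HB Require Import structures.
From mathcomp Require Import all_boot all_order all_algebra.
Set Implicit Arguments. Unset Strict Implicit. Unset Printing Implicit Defensive.
Import GRing.Theory.
Local Open Scope ring_scope.

Definition hmonomial {X : zmodType} (k : nat) (x : X) : hseries X :=
  fun i => if i == k then x else 0.

Lemma hmonomial0_neq0 (W : lmodType CC) (w : W) :
  w != 0 -> hmonomial 0 w <> hzero W.
Proof.
move=> /negP w_neq0 h; apply: w_neq0; apply/eqP.
by have := congr1 (fun f => f 0%N) h; rewrite /hmonomial eqxx.
Qed.

Lemma hscale_monomial1 (W : lmodType CC) (k : nat) (t : hseries W) :
  hscale (hmonomial k 1) t = hshift k t.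
Proof.
apply: functional_extensionality => m; rewrite /hscale /hshift /hmonomial.
case: ltnP => [m_lt_k|k_le_m].
- rewrite big1 // => i _; case: eqP => [i_eq_k|_]; last by rewrite scale0r.
  by move: (ltn_ord i); rewrite i_eq_k ltnS leqNgt m_lt_k.
- rewrite (bigD1 (Ordinal (k_le_m : (k < m.+1)%N))) //= eqxx scale1r.
  rewrite big1 ?addr0 // => i i_neq_k.
  by rewrite ifN ?scale0r //; apply: contra i_neq_k => /eqP i_eq_k; apply/eqP/val_inj.
Qed.

Lemma hscale_monomial0_lead (W : lmodType CC) (a : CC) (t : hseries W) :
  hscale (hmonomial 0 a) t 0%N = a *: t 0%N.
Proof. by rewrite /hscale big_ord1. Qed.

Lemma hext_modes_monomial0_lead (V W : lmodType CC) (YW : V -> int -> W -> W)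
    (u : V) (n : int) (t : hseries W) :
  hext_modes YW (hmonomial 0 u) n t 0%N = YW u n (t 0%N).
Proof. by rewrite /hext_modes big_ord1. Qed.

Section HSubmodule.

Variables (V W : lmodType CC) (YW : V -> int -> W -> W) (S : hseries W -> Prop).
Hypothesis S_sub : is_hsubmodule (hext_modes YW) S.

Definition lead_coefs (x : W) : Prop := exists2 t, S t & t 0%N = x.

Lemma hsubmodule_lead_neq0 :
  (exists2 s, S s & s <> hzero W) -> exists2 s, S s & s 0%N != 0.
Proof.
case: S_sub => _ _ _ _ S_sat [s Ss s_neq0].
have ex_nz : exists k, s k != 0.
  apply: NNPP => no_nz; apply: s_neq0; apply: functional_extensionality => k.
  by apply/eqP; apply: NNPP => sk_nz; apply: no_nz; exists k; apply/negP.
case: (ex_minnP ex_nz) => -[|k] sk_nz k_min; first by exists s.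
exists (fun i => s (i + k.+1)%N); last by rewrite add0n.
apply: (S_sat k.+1) => //.
suff -> : hshift k.+1 (fun i => s (i + k.+1)%N) = s by [].
apply: functional_extensionality => i; rewrite /hshift.
case: ltnP => [i_small|i_big]; last by rewrite subnK.
by apply/esym/eqP; apply: contraTT i_small => /k_min; rewrite -leqNgt.
Qed.

Lemma is_submodule_lead_coefs : is_submodule YW lead_coefs.
Proof.
case: S_sub => -[S0 SD] SZ SY _ _; split.
- by exists (hzero W).
- move=> a x x' [t St <-] [t' St' <-].
  exists (hadd (hscale (hmonomial 0 a) t) t'); first by apply: SD => //; apply: SZ.
  by rewrite /hadd hscale_monomial0_lead.
- move=> u n x [t St <-].
  exists (hext_modes YW (hmonomial 0 u) n t); first exact: SY.
  exact: hext_modes_monomial0_lead.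
Qed.

Lemma hsubmodule_approx : (forall x, lead_coefs x) ->
  forall w k, exists2 s, S s & forall i, (i < k)%N -> s i = w i.
Proof.
case: S_sub => -[S0 SD] SZ _ _ _ lead_all w.
elim=> [|k [s Ss s_eq]]; first by exists (hzero W).
have [t St t0] := lead_all (w k - s k).
exists (hadd s (hshift k t)).
  by apply: SD => //; rewrite -hscale_monomial1; apply: SZ.
move=> i; rewrite ltnS leq_eqVlt /hadd /hshift => /orP[/eqP ->|i_lt_k].
  by rewrite ltnn subnn t0 addrC subrK.
by rewrite i_lt_k addr0 s_eq.
Qed.

Lemma hsubmodule_full : (forall x, lead_coefs x) -> forall w, S w.
Proof.
move=> lead_all w; case: S_sub => _ _ _ S_closed _.
by apply: S_closed => k; apply: hsubmodule_approx.
Qed.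

End HSubmodule.

Theorem lemma3p3 (V0 : lmodType CC) (vac : V0) (Y : V0 -> int -> V0 -> V0)
  (W0 : lmodType CC) (YW : V0 -> int -> W0 -> W0) :
  is_nonlocal_va vac Y ->
  is_nlva_module vac Y YW ->
  is_simple_module YW ->
  is_simple_hmodule (hext_modes YW).
Proof.
move=> _ _ [[w0 w0_neq0] W0_simple]; split.
  by exists (hmonomial 0 w0); apply: hmonomial0_neq0.
move=> S S_sub.
case: (classic (exists2 s, S s & s <> hzero W0)) => [S_nz|S_zero]; last first.
  by left => w Sw; apply: NNPP => w_nz; apply: S_zero; exists w.
right; apply: (hsubmodule_full S_sub).
have [s Ss s0_neq0] := hsubmodule_lead_neq0 S_sub S_nz.
case: (W0_simple _ (is_submodule_lead_coefs S_sub)) => [lead_zero|//].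
by case/negP: s0_neq0; apply/eqP/lead_zero; exists s.
Qed.
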